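(* For every $k\ge1$, $|G_k|=|B_k|/2$.
   Context: Let $C_2=\{e,\sigma\}$ with $\sigma=(1,2)$. Define $B_1=C_2$ and $B_k=B_{k-1}\wr C_2$ for $k>1$, with elements written as wreath recursions $(g_1,g_2)\pi$, $g_1,g_2\in B_{k-1}$, $\pi\in C_2$, and multiplication $(g_1,g_2)\pi\cdot(h_1,h_2)\rho=(g_1h_{\pi(1)},g_2h_{\pi(2)})\pi\rho$. Define $G_1=\{e\}$ and, for $k>1$, $G_k=\{(g_1,g_2)\pi\in B_k : g_1g_2\in G_{k-1}\}$. *)

From mathcomp Require Import all_boot all_fingroup.
Set Implicit Arguments. Unset Strict Implicit. Unset Printing Implicit Defensive.

(* C_2 = 'S_2, the symmetric group on {1,2} (here 'I_2 = {0,1}, point 1 <-> ord0,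
   point 2 <-> ord_max).  BT k is the carrier of B_(k+1):
   BT 0 = C_2 = B_1, BT (k+1) = BT k * BT k * C_2, the triple (g1, g2, pi)
   standing for the wreath recursion (g1, g2) pi. *)
Fixpoint BT (k : nat) : finType :=
  if k is k'.+1 then ((BT k' * BT k') * 'S_2)%type : finType else 'S_2 : finType.

Definition pick_at {T : Type} (pi : 'S_2) (i : 'I_2) (h1 h2 : T) : T :=
  if pi i == ord0 then h1 else h2.

(* (g1,g2)pi * (h1,h2)rho = (g1 h_{pi(1)}, g2 h_{pi(2)}) pi rho *)
Fixpoint bmul (k : nat) : BT k -> BT k -> BT k :=
  match k return BT k -> BT k -> BT k with
  | 0 => fun x y => (x * y)%g
  | k'.+1 => fun x y =>
      let: (g1, g2, pi) := x in
      let: (h1, h2, rho) := y in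
      (bmul (g1) (pick_at pi ord0 h1 h2),
       bmul (g2) (pick_at pi ord_max h1 h2),
       (pi * rho)%g)
  end.

Fixpoint bone (k : nat) : BT k :=
  match k return BT k with
  | 0 => 1%g
  | k'.+1 => (bone k', bone k', 1%g)
  end.

(* membership in G_(k+1): G_1 = {e}, G_k = {(g1,g2)pi | g1 g2 \in G_(k-1)} *)
Fixpoint inG (k : nat) : BT k -> bool :=
  match k return BT k -> bool with
  | 0 => fun x => x == 1%g
  | k'.+1 => fun x => let: (g1, g2, _) := x in inG (bmul g1 g2)
  end.

Definition B (k : nat) : finType := BT k.-1.
Definition G (k : nat) : {set B k} := [set x : B k | inG (x : BT k.-1)].

From mathcomp Require Import all_boot all_fingroup.

(* The shear (g1, g2, pi) |-> (g1, g1 g2, pi) of B_(k+1) is injective, since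
   left multiplication in B_k is cancellative, and it maps G_(k+1) exactly
   onto B_k x G_k x C_2.  Hence |G_(k+1)| = |B_k| |G_k| 2, and the ratio
   |G|/|B| = 1/2 propagates by induction from G_1 = {e} inside B_1 = C_2. *)

Lemma perm2_ord0_eq0 (pi : 'S_2) : (pi ord0 == ord0) = (pi ord_max != ord0).
Proof.
have : pi ord0 != pi ord_max by rewrite (inj_eq perm_inj).
by case: (pi ord0) => [[|[|a]] ?]; case: (pi ord_max) => [[|[|b]] ?].
Qed.

Lemma bmulI (n : nat) (g : BT n) : injective (bmul g).
Proof.
elim: n g => [g|n IH [[g1 g2] pi]]; first exact: mulgI.
move=> [[h1 h2] rho] [[h1' h2'] rho'] /= [/IH e1 /IH e2 /mulgI ->].
by move: e1 e2; rewrite /pick_at perm2_ord0_eq0; case: eqP => _ /= -> ->.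
Qed.

Definition shear {n : nat} (x : BT n.+1) : BT n.+1 :=
  let: (g1, g2, pi) := x in (g1, bmul g1 g2, pi).

Lemma shear_inj (n : nat) : injective (@shear n).
Proof. by move=> [[a1 a2] p] [[b1 b2] q] [<- /bmulI -> <-]. Qed.

Lemma inG_shear_preim (n : nat) :
  [set x : BT n.+1 | inG x] =
    shear @^-1: setX (setX [set: BT n] [set y : BT n | inG y]) [set: 'S_2].
Proof. by apply/setP => [[[g1 g2] pi]]; rewrite !inE andbT. Qed.

Lemma card_inG (n : nat) : #|[set x : BT n | inG x]| * 2 = #|BT n|.
Proof.
elim: n => [|n IH].
  have -> : [set x : BT 0 | inG x] = [set 1%g : 'S_2].
    by apply/setP => x; rewrite !inE.
  by rewrite cards1 card_Sn.
rewrite inG_shear_preim card_preimset; last exact: shear_inj.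
rewrite !cardsX !cardsT.
change #|BT n.+1| with #|{: (BT n * BT n) * 'S_2}|.
by rewrite !card_prod -{3}IH mulnA mulnAC.
Qed.

Theorem mainTheorem11 : forall k : nat, 1 <= k -> #|G k| * 2 = #|B k|.
Proof. by case=> // n _; exact: card_inG. Qed.
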